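(* Let $R=\bigoplus_{s\in S}R_s$ be an epsilon-strongly graded $S$-graded ring inducing $S$. Then $R$ is graded von Neumann regular if and only if $R_e$ is a von Neumann regular ring for every idempotent $e\in S$.
   Context: Rings are associative, not necessarily unital. $S$-graded ring inducing $S$: $S$ a partial groupoid, $R=\bigoplus_{s\in S}R_s$, $R_sR_t\subseteq R_{st}$ when $st$ defined, $R_sR_t\ne0$ implies $st$ defined. Convention: $0\in S$, $R_0=0$, $S\setminus\{0\}=\{s:R_s\ne0\}$, undefined products set to $0$, $0$ absorbing. $H_R=\bigcup_sR_s$. $S$ cancellative: $0\ne su=tu$ or $0\ne us=ut$ implies $s=t$. (LRI): for every $s\in S$ there exist $s^{-1}\in S$ and idempotents $e,f$ with $es=sf=s$, $fs^{-1}=s^{-1}e=s^{-1}$, $ss^{-1}=e$, $s^{-1}s=f$. $R_sR_t$ denotes the additive subgroup generated by products. $R$ is epsilon-strongly graded if $S$ is cancellative, satisfies (LRI), and for every $s\in S$ there exists $\epsilon(s)\in R_sR_{s^{-1}}$ such that $\epsilon(s)x=x=x\epsilon(s^{-1})$ for every $x\in R_s$. $R$ is graded von Neumann regular if $x\in xRx$ for all $x\in H_R$. *)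

From HB Require Import structures.
From mathcomp Require Import all_boot all_order all_algebra.
Set Implicit Arguments. Unset Strict Implicit. Unset Printing Implicit Defensive.
Import GRing.Theory.
Local Open Scope ring_scope.

Definition nu_ring (R : zmodType) (mul : R -> R -> R) : Prop :=
  associative mul /\ left_distributive mul +%R /\ right_distributive mul +%R.

(* The partial groupoid S is encoded with an adjoined absorbing zero [z]:
   op s t = z means "st undefined" (for s, t <> z). *)

(* R_s R_t : the additive subgroup generated by products a b, a in A, b in B
   (= finite sums of such products, since A is closed under negation). *)
Definition prod_span (R : zmodType) (mul : R -> R -> R)
    (A B : R -> Prop) (x : R) : Prop :=
  exists l : seq (R * R),
    (forall p, p \in l -> A p.1 /\ B p.2) /\
    x = \sum_(p <- l) mul p.1 p.2.

Definition add_subgroup (R : zmodType) (A : R -> Prop) : Prop :=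
  A 0 /\ (forall x y, A x -> A y -> A (x + y)) /\ (forall x, A x -> A (- x)).

(* R = \bigoplus_{s in S} R_s is an S-graded ring inducing S
   (with the conventions 0 in S, R_0 = 0, S \ {0} = {s | R_s <> 0},
   undefined products = 0, 0 absorbing). *)
Definition graded_inducing (R : zmodType) (mul : R -> R -> R)
    (S : eqType) (op : S -> S -> S) (z : S) (comp : S -> R -> Prop) : Prop :=
  [/\ nu_ring mul /\ (forall s, add_subgroup (comp s)),
      (forall x : R, exists l : seq (S * R),
          uniq (map fst l) /\ (forall p, p \in l -> comp p.1 p.2) /\
          x = \sum_(p <- l) p.2),
      (forall l : seq (S * R),
          uniq (map fst l) -> (forall p, p \in l -> comp p.1 p.2) ->
          \sum_(p <- l) p.2 = 0 -> forall p, p \in l -> p.2 = 0),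
      (forall x, comp z x -> x = 0) /\
      (forall s, s <> z -> exists x, comp s x /\ x <> 0)
    & ((forall s, op z s = z /\ op s z = z) /\
          (* R_s R_t subset R_{st}; in particular R_s R_t <> 0 forces st <> 0,
             i.e. st defined, because R_z = 0 *)
          (forall s t x y, comp s x -> comp t y -> comp (op s t) (mul x y)))].

Definition cancellative (S : Type) (op : S -> S -> S) (z : S) : Prop :=
  forall s t u, (op s u <> z -> op s u = op t u -> s = t) /\
                (op u s <> z -> op u s = op u t -> s = t).

Definition idem (S : Type) (op : S -> S -> S) (e : S) : Prop := op e e = e.

Definition lri_inv (S : Type) (op : S -> S -> S) (s s' : S) : Prop :=
  exists e f, [/\ idem op e, idem op f, op e s = s, op s f = s &
                  [/\ op f s' = s', op s' e = s', op s s' = e & op s' s = f]].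

Definition LRI (S : Type) (op : S -> S -> S) : Prop :=
  forall s, exists s', lri_inv op s s'.

(* epsilon-strongly graded.  (In a cancellative (LRI) partial groupoid the
   inverse s^{-1} is unique, so quantifying over all inverses s' agrees with
   the paper's definition.) *)
Definition eps_strongly_graded (R : zmodType) (mul : R -> R -> R)
    (S : eqType) (op : S -> S -> S) (z : S) (comp : S -> R -> Prop) : Prop :=
  [/\ cancellative op z, LRI op &
      exists eps : S -> R, forall s s', lri_inv op s s' ->
        prod_span mul (comp s) (comp s') (eps s) /\
        (forall x, comp s x -> mul (eps s) x = x /\ mul x (eps s') = x)].

Definition graded_vNr (R : zmodType) (mul : R -> R -> R)
    (S : Type) (comp : S -> R -> Prop) : Prop :=
  forall s x, comp s x -> exists y : R, x = mul (mul x y) x.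

Definition vNr_subring (R : zmodType) (mul : R -> R -> R) (A : R -> Prop) : Prop :=
  forall x, A x -> exists y, A y /\ x = mul (mul x y) x.

From mathcomp Require Import all_boot all_order all_algebra.
Set Implicit Arguments.
Unset Strict Implicit.
Import GRing.Theory.
Local Open Scope ring_scope.

(* (=>) For x in R_e (e idempotent), write x = x y x and decompose y into
   homogeneous parts y_t.  Then x y_t x lies in R_{ete}, and by cancellativity
   ete = e only for t = e, so comparing e-components gives x = x y_e x.
   (<=) Let x in R_s with inverse s' and e = ss'.  Since
   eps(s') = sum_i c_i d_i with c_i in R_{s'}, d_i in R_s, and x eps(s') = x,
   it suffices to find b in R_{s'} with (x b)(x c_i) = x c_i for all i: then
   x b x = x b x eps(s') = x.  Such a "left unit" x b for the finitely many
   elements x c_i of the von Neumann regular ring R_e is built one element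
   at a time. *)

Lemma add_subgroup_sum (R : zmodType) (A : R -> Prop) (I : eqType)
    (r : seq I) (P : pred I) (F : I -> R) :
  add_subgroup A -> (forall i, i \in r -> P i -> A (F i)) ->
  A (\sum_(i <- r | P i) F i).
Proof.
move=> [A0 [AD _]] AF; rewrite big_seq_cond; apply: (big_ind A) => // i.
by case/andP; exact: AF.
Qed.

Lemma add_subgroupB (R : zmodType) (A : R -> Prop) x y :
  add_subgroup A -> A x -> A y -> A (x - y).
Proof. by move=> [_ [AD AN]] Ax Ay; apply: AD => //; apply: AN. Qed.

Lemma lri_inv_sym (S : Type) (op : S -> S -> S) s s' :
  lri_inv op s s' -> lri_inv op s' s.
Proof. by case=> e [f [? ? ? ? [? ? ? ?]]]; exists f, e. Qed.

Lemma cancellative_idem_sandwich (S : eqType) (op : S -> S -> S) z e t :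
  cancellative op z -> idem op e -> e != z ->
  (op (op e t) e == e) = (t == e).
Proof.
move=> canc ee /eqP enz; apply/eqP/eqP => [ete | ->]; last by rewrite !ee.
have et : op e t = e by apply: (canc _ e e).1; rewrite ?ete ?ee.
by apply: (canc t e e).2; rewrite ?et ?ee.
Qed.

Section NonUnitalRing.
Variables (R : zmodType) (mul : R -> R -> R).
Hypothesis mul_ring : nu_ring mul.

Let mulA : associative mul. Proof. by case: mul_ring. Qed.
Let mulDl : left_distributive mul +%R. Proof. by case: mul_ring => _ []. Qed.
Let mulDr : right_distributive mul +%R. Proof. by case: mul_ring => _ []. Qed.

Lemma nu_mul0l a : mul 0 a = 0.
Proof. by apply: (addrI (mul 0 a)); rewrite -mulDl !addr0. Qed.

Lemma nu_mul0r a : mul a 0 = 0.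
Proof. by apply: (addrI (mul a 0)); rewrite -mulDr !addr0. Qed.

Lemma nu_mulBl a b c : mul (a - b) c = mul a c - mul b c.
Proof.
rewrite mulDl; congr (_ + _); apply: (addrI (mul b c)).
by rewrite -mulDl !subrr nu_mul0l.
Qed.

Lemma nu_mulBr a b c : mul c (a - b) = mul c a - mul c b.
Proof.
rewrite mulDr; congr (_ + _); apply: (addrI (mul c b)).
by rewrite -mulDr !subrr nu_mul0r.
Qed.

Lemma nu_mul_suml I (r : seq I) (P : pred I) (F : I -> R) a :
  mul (\sum_(i <- r | P i) F i) a = \sum_(i <- r | P i) mul (F i) a.
Proof.
by apply: (big_morph (mul^~ a)) => [u v|]; [exact: mulDl | exact: nu_mul0l].
Qed.

Lemma nu_mul_sumr I (r : seq I) (P : pred I) (F : I -> R) a :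
  mul a (\sum_(i <- r | P i) F i) = \sum_(i <- r | P i) mul a (F i).
Proof.
by apply: (big_morph (mul a)) => [u v|]; [exact: mulDr | exact: nu_mul0r].
Qed.

Section GradedRing.
Variables (S : eqType) (op : S -> S -> S) (comp : S -> R -> Prop).
Hypothesis comp_subgroup : forall s, add_subgroup (comp s).
Hypothesis comp_mul :
  forall s t x y, comp s x -> comp t y -> comp (op s t) (mul x y).

Section DirectSum.
Variable z : S.
Hypothesis comp_decompose : forall x : R, exists l : seq (S * R),
  uniq (map fst l) /\ (forall p, p \in l -> comp p.1 p.2) /\
  x = \sum_(p <- l) p.2.
Hypothesis comp_direct : forall l : seq (S * R),
  uniq (map fst l) -> (forall p, p \in l -> comp p.1 p.2) ->
  \sum_(p <- l) p.2 = 0 -> forall p, p \in l -> p.2 = 0.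
Hypothesis comp_z : forall x, comp z x -> x = 0.
Hypothesis op_cancel : cancellative op z.

(* Gathering terms of equal degree turns any homogeneous family into one
   with distinct degrees, to which [comp_direct] applies. *)
Lemma homogeneous_component_eq0 (l : seq (S * R)) s :
  (forall p, p \in l -> comp p.1 p.2) -> \sum_(p <- l) p.2 = 0 ->
  \sum_(p <- l | p.1 == s) p.2 = 0.
Proof.
move=> l_comp l_sum0.
set U := undup (map fst l).
set G := [seq (t, \sum_(p <- l | p.1 == t) p.2) | t <- U].
have G_deg : map fst G = U by rewrite /G -map_comp map_id_in.
have G_comp : forall p, p \in G -> comp p.1 p.2.
  move=> p /mapP[t _ ->] /=; apply: add_subgroup_sum => // q ql /eqP <-.
  exact: l_comp.
have G_sum0 : \sum_(p <- G) p.2 = 0.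
  rewrite big_map /=; under eq_bigr do rewrite big_mkcond.
  rewrite exchange_big /= -[RHS]l_sum0; apply: eq_big_seq => p pl.
  rewrite -big_mkcond /=; under eq_bigl do rewrite eq_sym.
  by rewrite -big_filter filter_pred1_uniq ?undup_uniq ?mem_undup ?map_f ?big_seq1.
have [sU | sNU] := boolP (s \in U).
  have G_uniq : uniq (map fst G) by rewrite G_deg undup_uniq.
  apply: (@comp_direct G G_uniq G_comp G_sum0 (s, _)).
  by apply/mapP; exists s.
rewrite big_seq_cond big1 // => p /andP[pl /eqP ps].
by move: sNU; rewrite mem_undup -ps map_f.
Qed.

Lemma homogeneous_eq_component (l : seq (S * R)) s x :
  comp s x -> (forall p, p \in l -> comp p.1 p.2) -> x = \sum_(p <- l) p.2 ->
  x = \sum_(p <- l | p.1 == s) p.2.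
Proof.
move=> xs l_comp xE.
have L_comp : forall p, p \in (s, - x) :: l -> comp p.1 p.2.
  by move=> p; rewrite inE => /predU1P[-> | /l_comp //]; apply: (comp_subgroup s).2.2.
have L_sum0 : \sum_(p <- (s, - x) :: l) p.2 = 0 by rewrite big_cons -xE addNr.
move: (homogeneous_component_eq0 s L_comp L_sum0).
by rewrite big_cons eqxx /= => /eqP; rewrite addrC subr_eq0 eq_sym => /eqP.
Qed.

Lemma graded_vNr_idem_vNr :
  graded_vNr mul comp -> forall e, idem op e -> vNr_subring mul (comp e).
Proof.
move=> vNr e ee x xe; have [ez | enz] := eqVneq e z.
  exists 0; split; first exact: (comp_subgroup e).1.
  by rewrite ez in xe; rewrite (comp_z xe) !nu_mul0l.
have [y xyx] := vNr e x xe.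
have [ly [_ [ly_comp yE]]] := comp_decompose y.
exists (\sum_(p <- ly | p.1 == e) p.2); split.
  by apply: add_subgroup_sum => // p pl /eqP <-; exact: ly_comp.
pose L := [seq (op (op e q.1) e, mul (mul x q.2) x) | q <- ly].
have L_comp : forall p, p \in L -> comp p.1 p.2.
  by move=> p /mapP[q ql ->] /=; do 2!apply: comp_mul => //; exact: ly_comp.
have xE : x = \sum_(p <- L) p.2.
  by rewrite big_map {1}xyx yE nu_mul_sumr nu_mul_suml.
rewrite {1}(homogeneous_eq_component xe L_comp xE) big_map.
under eq_bigl do rewrite (cancellative_idem_sandwich _ op_cancel ee enz).
by rewrite -nu_mul_suml -nu_mul_sumr.
Qed.

End DirectSum.

Section LocalUnit.
Variables (s s' e : S) (x : R).
Hypothesis xs : comp s x.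
Hypotheses (ss'_e : op s s' = e) (e_idem : idem op e).
Hypotheses (s'e : op s' e = s') (s'ss' : op (op s' s) s' = s').
Hypothesis vNr_e : vNr_subring mul (comp e).

Lemma left_unit_extend b c : comp s' b -> comp s' c ->
  exists2 b', comp s' b' &
    mul (mul x b') (mul x c) = mul x c /\
    forall a, mul (mul x b) a = a -> mul (mul x b') a = a.
Proof.
move=> bs' cs'.
set a := mul x c; set a' := a - mul (mul x b) a.
have a'_e : comp e a'.
  have a_e : comp e a by rewrite -ss'_e; apply: comp_mul.
  apply: add_subgroupB => //; rewrite -e_idem; apply: comp_mul => //.
  by rewrite -ss'_e; apply: comp_mul.
have [u [u_e a'E]] := vNr_e a'_e.
set k := c - mul (mul b x) c.
have k_s' : comp s' k.
  by apply: add_subgroupB => //; rewrite -s'ss'; apply: comp_mul => //; exact: comp_mul.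
have xk : mul x k = a' by rewrite /k nu_mulBr /a' /a !mulA.
have ku_s' : comp s' (mul k u) by rewrite -s'e; apply: comp_mul.
set h := mul a' u.
(* As h a' = a' u a' = a', the new left unit x b + h - h (x b) still fixes
   whatever x b fixes, and also fixes a = x b a + a'. *)
exists (b + mul k u - mul (mul (mul k u) x) b).
  apply: add_subgroupB => //; first by apply: (comp_subgroup s').2.1.
  by rewrite -s'ss'; apply: comp_mul => //; exact: comp_mul.
have xb' : mul x (b + mul k u - mul (mul (mul k u) x) b)
           = mul x b + h - mul h (mul x b).
  by rewrite nu_mulBr mulDr /h -xk !mulA.
rewrite xb'; split => [|a0 ba0]; rewrite nu_mulBl mulDl -(mulA h).
  by rewrite -addrA -nu_mulBr -/a' /h -a'E /a' addrC subrK.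
by rewrite ba0 addrK.
Qed.

Lemma left_unit_seq (cs : seq R) : (forall c, c \in cs -> comp s' c) ->
  exists2 b, comp s' b &
    forall c, c \in cs -> mul (mul x b) (mul x c) = mul x c.
Proof.
elim: cs => [|c cs IH] cs_s'; first by exists 0; [exact: (comp_subgroup s').1 |].
have [c' c'cs|b b_s' bE] := IH; first by apply: cs_s'; rewrite inE c'cs orbT.
have [b' b'_s' [b'c b'E]] := left_unit_extend b_s' (cs_s' c (mem_head c cs)).
exists b' => // c'; rewrite inE => /predU1P[-> // | c'cs].
by apply: b'E; apply: bE.
Qed.

Lemma homogeneous_regular eps :
  prod_span mul (comp s') (comp s) eps -> mul x eps = x ->
  exists y, x = mul (mul x y) x.
Proof.
move=> [l [l_comp ->]] x_eps.
have [c /mapP[p pl ->]|b _ bE] := left_unit_seq (cs := map fst l).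
  exact: (l_comp p pl).1.
exists b; rewrite -{1 3}x_eps !nu_mul_sumr.
apply: eq_big_seq => p pl.
by rewrite !mulA -(mulA (mul x b)) bE ?map_f.
Qed.

End LocalUnit.

Lemma idem_vNr_graded_vNr :
  LRI op ->
  (exists eps : S -> R, forall s s', lri_inv op s s' ->
     prod_span mul (comp s) (comp s') (eps s) /\
     (forall x, comp s x -> mul (eps s) x = x /\ mul x (eps s') = x)) ->
  (forall e, idem op e -> vNr_subring mul (comp e)) -> graded_vNr mul comp.
Proof.
move=> lri [eps eps_spec] vNr s x xs.
have [s' ss'] := lri s.
have [eps_span _] := eps_spec s' s (lri_inv_sym ss').
have [_ /(_ x xs) [_ x_eps]] := eps_spec s s' ss'.
case: ss' => e [f [ee _ _ _ [fs' s'e ss'e s's]]].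
have s'ss' : op (op s' s) s' = s' by rewrite s's.
exact: homogeneous_regular xs ss'e ee s'e s'ss' (vNr e ee) _ eps_span x_eps.
Qed.

End GradedRing.
End NonUnitalRing.

Theorem corollary4p12 (R : zmodType) (mul : R -> R -> R)
    (S : eqType) (op : S -> S -> S) (z : S) (comp : S -> R -> Prop) :
  graded_inducing mul op z comp ->
  eps_strongly_graded mul op z comp ->
  (graded_vNr mul comp <->
   forall e : S, idem op e -> vNr_subring mul (comp e)).
Proof.
move=> [[ring sub] decomp direct [comp_z _] [_ cmul]] [canc lri eps_spec].
split=> [vNr | vNr_idem].
  exact (graded_vNr_idem_vNr ring sub cmul decomp direct comp_z canc vNr).
exact (idem_vNr_graded_vNr ring sub cmul lri eps_spec vNr_idem).
Qed.
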